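(* Let $m>1$, $d\ge 2$ and $t$ be integers with $\gcd(d,m)=1$ and $\gcd(d,t)=1$, and let $a$ be an indeterminate. Then \[ \sum_{k=0}^{m-1}[2dk+t]\frac{(q^t;q^d)_k^2(aq^t;q^d)_k(q^t/a;q^d)_k}{(q^d;q^d)_k^2(aq^d;q^d)_k(q^d/a;q^d)_k}q^{(d-2t)k}\equiv 0\pmod{\Phi_m(q)}. \]
   Context: For an indeterminate $q$, $(x;q)_k=(1-x)(1-xq)\cdots(1-xq^{k-1})$ (with $(x;q)_0=1$). For any integer $j$, $[j]=(1-q^j)/(1-q)$. $\Phi_m(q)$ is the $m$-th cyclotomic polynomial in $q$. A congruence $A\equiv B\pmod{\Phi_m(q)}$ between rational functions in $q$ and $a$ means that $A-B$, written as a quotient of polynomials with denominator coprime to $\Phi_m(q)$, has numerator divisible by $\Phi_m(q)$. *)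

From mathcomp Require Import all_boot all_algebra all_field.
Set Implicit Arguments. Unset Strict Implicit. Unset Printing Implicit Defensive.
Import GRing.Theory.
Local Open Scope ring_scope.

(* Polynomial ring Q[q][a]: inner variable q, outer variable a. *)
Definition R2 : idomainType := {poly {poly rat}}.
Definition F2 : fieldType := {fraction R2}.

Definition qv : F2 := tofrac ((('X : {poly rat})%:P) : R2).
Definition av : F2 := tofrac ('X : R2).

Definition PhiQ (m : nat) : R2 :=
  (map_poly (fun z : int => z%:~R : rat) 'Phi_m)%:P.

Definition qpoch (x y : F2) (k : nat) : F2 := \prod_(i < k) (1 - x * y ^+ i).

Definition qint (j : int) : F2 := (1 - qv ^ j) / (1 - qv).

Definition dvdR (g f : R2) : Prop := exists c : R2, f = c * g.
Definition coprimeR (f g : R2) : Prop :=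
  forall h : R2, dvdR h f -> dvdR h g -> h \is a GRing.unit.

(* A = B (mod Phi_m(q)) for rational functions A, B in q and a:
   A - B = N / D with D coprime to Phi_m(q) and Phi_m(q) | N. *)
Definition congr_Phi (m : nat) (A B : F2) : Prop :=
  exists N D : R2, coprimeR D (PhiQ m) /\ dvdR (PhiQ m) N /\
    A - B = tofrac N / tofrac D.

(* Specialise q to a primitive m-th root of unity z, keeping a generic.  Since
   gcd(d, m) = 1, w := z^d is again primitive, so u := z^t satisfies u w^r = 1
   for some r < m.  The terms with k > r then vanish, because (u; w)_k contains
   the factor 1 - u w^r.  For k <= r, the reflection
   (x u; w)_k (y w; w)_(r-k) = (prod_(j<k) - x u w^j) (y w; w)_r  (x y = 1)
   rewrites the k-th and the (r-k)-th terms as opposite multiples of a common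
   product, so the specialised sum is 0 in C(a).  Finally, a rational function of
   Q(q, a) whose denominator stays nonzero at q = z, and whose value there is 0,
   has a numerator divisible by the minimal polynomial Phi_m of z and a
   denominator coprime to it. *)

From HB Require Import structures.
From mathcomp Require Import all_boot all_algebra all_field.
From mathcomp Require Import ring zify.
Set Implicit Arguments. Unset Strict Implicit. Unset Printing Implicit Defensive.
Import GRing.Theory.
Local Open Scope ring_scope.

Section QSeries.

Variable F : fieldType.
Implicit Types (x y u w a : F) (k r : nat).

Definition qpochhammer x y k : F := \prod_(i < k) (1 - x * y ^+ i).

Lemma qpochhammerS x y k : qpochhammer x y k.+1 = qpochhammer x y k * (1 - x * y ^+ k).
Proof. by rewrite /qpochhammer big_ord_recr. Qed.

Lemma qpochhammer_eq0 x y i k : (i < k)%N -> x * y ^+ i = 1 -> qpochhammer x y k = 0.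
Proof.
by move=> ltik xyi; apply/eqP/prodf_eq0; exists (Ordinal ltik); rewrite //= xyi subrr.
Qed.

Lemma qpochhammer_neq0 x y k :
  (forall i, (i < k)%N -> x * y ^+ i != 1) -> qpochhammer x y k != 0.
Proof. by move=> h; apply/prodf_neq0 => i _; rewrite subr_eq0 eq_sym h. Qed.

Lemma qpochhammer_reflect x y u w r k : x * y = 1 -> u * w ^+ r = 1 -> (k <= r)%N ->
  qpochhammer (x * u) w k * qpochhammer (y * w) w (r - k)
  = (\prod_(j < k) - (x * u * w ^+ j)) * qpochhammer (y * w) w r.
Proof.
move=> xy1 uwr; elim: k => [|k IHk] ltkr.
  by rewrite subn0 /qpochhammer !big_ord0 !mul1r.
have reflect_factor : 1 - x * u * w ^+ k = - (x * u * w ^+ k) * (1 - y * w * w ^+ (r - k.+1)).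
  have inverse : x * u * w ^+ k * (y * w * w ^+ (r - k.+1)) = 1.
    have wr : w ^+ r = w ^+ k.+1 * w ^+ (r - k.+1) by rewrite -exprD subnKC.
    by rewrite -xy1 -[RHS]mulr1 -uwr wr exprS; ring.
  by rewrite mulrBr mulr1 mulNr inverse opprK addrC.
have split_last : qpochhammer (y * w) w (r - k) =
    qpochhammer (y * w) w (r - k.+1) * (1 - y * w * w ^+ (r - k.+1)).
  by rewrite -qpochhammerS subnSK.
rewrite big_ord_recr /= mulrAC -(IHk (ltnW ltkr)) split_last qpochhammerS reflect_factor.
by ring.
Qed.

Definition qnumer u w a k : F :=
  qpochhammer u w k ^+ 2 * qpochhammer (a * u) w k * qpochhammer (u / a) w k.

Definition qdenom w a k : F := qnumer w w a k.

Lemma qnumer_qdenom_reflect u w a r k : u * w ^+ r = 1 -> a != 0 -> (k <= r)%N ->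
  qnumer u w a k * qdenom w a (r - k) = (\prod_(j < k) (u * w ^+ j)) ^+ 4 * qdenom w a r.
Proof.
move=> uwr a0 lekr.
have R1 := qpochhammer_reflect (mulr1 1) uwr lekr.
have Ra := qpochhammer_reflect (divff a0) uwr lekr.
have Ra' := qpochhammer_reflect (mulVf a0) uwr lekr.
rewrite !mul1r in R1.
rewrite /qdenom /qnumer [u / a]mulrC [w / a]mulrC.
transitivity ((qpochhammer u w k * qpochhammer w w (r - k)) ^+ 2
    * (qpochhammer (a * u) w k * qpochhammer (a^-1 * w) w (r - k))
    * (qpochhammer (a^-1 * u) w k * qpochhammer (a * w) w (r - k))); first by ring.
rewrite R1 Ra Ra'.
transitivity ((\prod_(j < k) ((- (u * w ^+ j)) ^+ 2 * - (a * u * w ^+ j) * - (a^-1 * u * w ^+ j)))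
    * (qpochhammer w w r ^+ 2 * qpochhammer (a^-1 * w) w r * qpochhammer (a * w) w r)).
  by rewrite !big_split /=; ring.
congr (_ * _); last by ring.
by rewrite -prodrXl; apply: eq_bigr => j _; field.
Qed.

Lemma mul_expr_eq1 u w r : u * w ^+ r = 1 -> u = w ^ (- r%:Z).
Proof. by rewrite -exprnN mulrC => /mulr1_eq. Qed.

Definition qweight u w k : F :=
  (\prod_(j < k) (u * w ^+ j)) ^+ 4 * (w ^+ k / u ^+ (2 * k)).

Lemma qweight_expz u w r k : w != 0 -> u * w ^+ r = 1 ->
  qweight u w k = w ^ (2 * k%:Z ^+ 2 - k%:Z - 2 * r%:Z * k%:Z).
Proof.
move=> w0 /mul_expr_eq1 u_eq.
have prod_sq : (\prod_(j < k) (u * w ^+ j)) ^+ 2 = w ^ (k%:Z * (k%:Z - 1) - 2 * r%:Z * k%:Z).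
  elim: k => [|k IHk]; first by rewrite big_ord0 expr1n !(mul0r, mulr0) subr0 expr0z.
  rewrite big_ord_recr /= exprMn IHk u_eq (exprnP w k) -expfzDr // (exprnP _ 2) exprz_exp -expfzDr //.
  by congr (w ^ _); rewrite -addn1 PoszD; ring.
rewrite /qweight -[4%N]/(2 * 2)%N exprM prod_sq u_eq (exprnP _ 2) (exprnP w k).
rewrite (exprnP _ (2 * k)) !exprz_exp invr_expz -!expfzDr //.
by congr (w ^ _); rewrite PoszM; ring.
Qed.

Lemma qweight_reflect u w r k : w != 0 -> u * w ^+ r = 1 -> (k <= r)%N ->
  qweight u w k * (u * w ^+ (2 * k)) = qweight u w (r - k).
Proof.
move=> w0 uwr lekr; rewrite !(qweight_expz _ w0 uwr) (mul_expr_eq1 uwr) (exprnP w).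
by rewrite -!expfzDr //; congr (w ^ _); rewrite -subzn // PoszM; ring.
Qed.

Definition qterm u w a k : F :=
  (1 - u * w ^+ (2 * k)) * (qnumer u w a k / qdenom w a k) * (w ^+ k / u ^+ (2 * k)).

Lemma qterm_mul_qdenom u w a r k : u * w ^+ r = 1 -> a != 0 -> (k <= r)%N ->
  qdenom w a k != 0 ->
  qterm u w a k * (qdenom w a k * qdenom w a (r - k))
  = (1 - u * w ^+ (2 * k)) * qweight u w k * qdenom w a r.
Proof.
move=> uwr a0 lekr Dk0.
transitivity ((1 - u * w ^+ (2 * k)) * (qnumer u w a k / qdenom w a k * qdenom w a k
                * qdenom w a (r - k)) * (w ^+ k / u ^+ (2 * k))); first by rewrite /qterm; ring.
by rewrite divfK // qnumer_qdenom_reflect // /qweight; ring.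
Qed.

Lemma qterm_reflect u w a r k : w != 0 -> a != 0 -> u * w ^+ r = 1 -> (k <= r)%N ->
  qdenom w a k != 0 -> qdenom w a (r - k) != 0 ->
  qterm u w a k + qterm u w a (r - k) = 0.
Proof.
move=> w0 a0 uwr lekr Dk0 Drk0.
have := qterm_mul_qdenom uwr a0 (leq_subr k r) Drk0; rewrite subKn // => Erk.
have := qweight_reflect w0 uwr (leq_subr k r); rewrite subKn // => Wrk.
apply: (mulIf (mulf_neq0 Dk0 Drk0)).
rewrite mul0r mulrDl (qterm_mul_qdenom uwr a0 lekr Dk0) [qdenom w a k * _]mulrC Erk.
transitivity (qdenom w a r * (qweight u w k - qweight u w k * (u * w ^+ (2 * k))
  + (qweight u w (r - k) - qweight u w (r - k) * (u * w ^+ (2 * (r - k)))))); first by ring.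
by rewrite Wrk (qweight_reflect w0 uwr lekr); ring.
Qed.

Lemma sum_qterm_eq0 u w a r n : w != 0 -> a != 0 -> u * w ^+ r = 1 -> (2 : F) != 0 ->
  (r < n)%N -> (forall k, (k <= r)%N -> qdenom w a k != 0) ->
  \sum_(k < n) qterm u w a k = 0.
Proof.
move=> w0 a0 uwr two0 ltrn D0.
have qterm_eq0 k : (r < k)%N -> qterm u w a k = 0.
  move=> ltrk; rewrite /qterm /qnumer (qpochhammer_eq0 ltrk uwr).
  by rewrite expr0n /= !mul0r mulr0 mul0r.
rewrite (bigID (fun k : 'I_n => (k < r.+1)%N)) /= [X in _ + X]big1 ?addr0; last first.
  by move=> k; rewrite -leqNgt => /qterm_eq0.
rewrite -big_ord_widen // -(big_mkord xpredT).
set S := \sum_(0 <= k < r.+1) qterm u w a k.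
have S_rev : S = \sum_(0 <= k < r.+1) qterm u w a (r - k).
  by rewrite /S big_nat_rev; apply: eq_bigr => k _; rewrite add0n subSS.
have S2 : S * 2 = 0.
  rewrite mulr_natr mulr2n {2}S_rev /S -big_split big_nat_cond big1 // => k /andP[/andP[_ ltkr] _].
  by apply: (qterm_reflect w0 a0 uwr) => //; apply: D0; rewrite ?leq_subr.
by move/eqP: S2; rewrite mulf_eq0 (negbTE two0) orbF => /eqP.
Qed.

Lemma qdenom_neq0 m w a k : m.-primitive_root w -> a ^+ m != 1 -> (k < m)%N ->
  qdenom w a k != 0.
Proof.
move=> prim_w am1 ltkm.
have wj1 j : (0 < j < m)%N -> w ^+ j != 1.
  by case/andP=> j0 ltjm; rewrite -(prim_order_dvd prim_w); apply/negP => /(dvdn_leq j0); lia.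
have awj1 b j : b ^+ m != 1 -> b * w ^+ j != 1.
  have bwjm : (b * w ^+ j) ^+ m = b ^+ m.
    by rewrite exprMn exprAC (prim_expr_order prim_w) expr1n mulr1.
  by apply: contraNneq => bwj; rewrite -bwjm bwj expr1n.
rewrite /qdenom !mulf_neq0 // qpochhammer_neq0 // => i ltik.
1,2: by rewrite -exprS wj1 //; lia.
- by rewrite -mulrA -exprS awj1.
- by rewrite mulrAC -exprS mulrC awj1 // exprVn invr_eq1.
Qed.

Definition qsummand (d : nat) (t : int) (q a : F) (k : nat) : F :=
  (1 - q ^ (2 * d%:Z * k%:Z + t)) / (1 - q) * qnumer (q ^ t) (q ^+ d) a k
  / qdenom (q ^+ d) a k * q ^ ((d%:Z - 2 * t) * k%:Z).

Lemma qsummandE d t q a k : q != 0 ->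
  qsummand d t q a k = qterm (q ^ t) (q ^+ d) a k / (1 - q).
Proof.
move=> q0; rewrite /qsummand /qterm.
have -> : q ^ (2 * d%:Z * k%:Z + t) = q ^ t * (q ^+ d) ^+ (2 * k).
  by rewrite expfzDr // mulrC -exprM exprnP; congr (_ * q ^ _); rewrite !PoszM; ring.
have -> : q ^ ((d%:Z - 2 * t) * k%:Z) = (q ^+ d) ^+ k / (q ^ t) ^+ (2 * k).
  rewrite -!exprM !exprnP !exprz_exp invr_expz -expfzDr //.
  by congr (q ^ _); rewrite !PoszM; ring.
by ring.
Qed.

Lemma prim_root_neq0 m (z : F) : m.-primitive_root z -> z != 0.
Proof.
move=> prim_z; apply: contra_eq_neq (prim_expr_order prim_z) => ->.
by rewrite expr0n gtn_eqF ?(prim_order_gt0 prim_z) // eq_sym oner_eq0.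
Qed.

Lemma sum_qsummand_eq0 m d t z a : m.-primitive_root z -> coprime d m ->
  a != 0 -> a ^+ m != 1 -> (2 : F) != 0 -> \sum_(k < m) qsummand d t z a k = 0.
Proof.
move=> prim_z dm a0 am1 two0.
have z0 := prim_root_neq0 prim_z.
have prim_w : m.-primitive_root (z ^+ d) by rewrite prim_root_exp_coprime.
have [r uwr] : {r : 'I_m | (z ^ t)^-1 = (z ^+ d) ^+ r}.
  apply: (prim_rootP prim_w).
  rewrite exprVn exprnP exprz_exp mulrC -exprz_exp -exprnP (prim_expr_order prim_z).
  by rewrite exp1rz invr1.
have zwr : z ^ t * (z ^+ d) ^+ r = 1 by rewrite -uwr divff ?expfz_neq0.
under eq_bigr => k _ do rewrite qsummandE //.
rewrite -mulr_suml (sum_qterm_eq0 _ _ zwr) ?mul0r ?expf_neq0 // => k lekr.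
by apply: (qdenom_neq0 prim_w am1); apply: leq_ltn_trans (ltn_ord r).
Qed.

End QSeries.

Definition FC : fieldType := {fraction {poly algC}}.

Section Specialization.

Variable z : algC.

Definition ev : R2 -> {poly algC} := map_poly (horner_eval z) \o map_poly (map_poly ratr).
HB.instance Definition _ := GRing.RMorphism.on ev.

Lemma ev_coef (f : R2) i : (ev f)`_i = (map_poly ratr f`_i).[z].
Proof. by rewrite /ev /= !coef_map. Qed.

Lemma ev_polyC (p : {poly rat}) : ev p%:P = ((map_poly ratr p).[z])%:P.
Proof. by rewrite /ev /= !map_polyC. Qed.

Definition spec (x : F2) (v : FC) : Prop :=
  exists N D : R2, ev D != 0 /\ x = tofrac N / tofrac D /\ v = tofrac (ev N) / tofrac (ev D).

Lemma spec_tofrac p : spec (tofrac p) (tofrac (ev p)).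
Proof. by exists p, 1; rewrite !rmorph1 !divr1 oner_neq0. Qed.

Lemma spec1 : spec 1 1.
Proof. by have := spec_tofrac 1; rewrite !rmorph1. Qed.

Lemma specD x1 x2 v1 v2 : spec x1 v1 -> spec x2 v2 -> spec (x1 + x2) (v1 + v2).
Proof.
move=> [N1 [D1 [D10 [-> ->]]]] [N2 [D2 [D20 [-> ->]]]].
have D1F : tofrac D1 != 0 :> F2 by rewrite tofrac_eq0; apply: contraNneq D10 => ->; rewrite rmorph0.
have D2F : tofrac D2 != 0 :> F2 by rewrite tofrac_eq0; apply: contraNneq D20 => ->; rewrite rmorph0.
exists (N1 * D2 + N2 * D1), (D1 * D2); split; first by rewrite rmorphM mulf_neq0.
split; first by rewrite (addf_div _ _ D1F D2F) rmorphD !rmorphM.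
by rewrite addf_div ?tofrac_eq0 // !rmorphD !rmorphM.
Qed.

Lemma specM x1 x2 v1 v2 : spec x1 v1 -> spec x2 v2 -> spec (x1 * x2) (v1 * v2).
Proof.
move=> [N1 [D1 [D10 [-> ->]]]] [N2 [D2 [D20 [-> ->]]]].
by exists (N1 * N2), (D1 * D2); rewrite !mulf_div !rmorphM mulf_neq0.
Qed.

Lemma specN x v : spec x v -> spec (- x) (- v).
Proof.
move=> [N [D [D0 [-> ->]]]].
by exists (- N), D; rewrite !rmorphN !mulNr.
Qed.

Lemma specV x v : spec x v -> v != 0 -> spec x^-1 v^-1.
Proof.
move=> [N [D [D0 [-> ->]]]] v0.
exists D, N; rewrite !invf_div; split=> //.
by apply: contraNneq v0 => N0; rewrite N0 rmorph0 mul0r.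
Qed.

Lemma specB x1 x2 v1 v2 : spec x1 v1 -> spec x2 v2 -> spec (x1 - x2) (v1 - v2).
Proof. by move=> h1 h2; apply: specD h1 (specN h2). Qed.

Lemma spec_div x1 x2 v1 v2 : spec x1 v1 -> spec x2 v2 -> v2 != 0 -> spec (x1 / x2) (v1 / v2).
Proof. by move=> h1 h2 v20; apply: specM h1 (specV h2 v20). Qed.

Lemma specX x v n : spec x v -> spec (x ^+ n) (v ^+ n).
Proof.
move=> h; elim: n => [|n IHn]; first by rewrite !expr0; exact: spec1.
by rewrite !exprS; apply: specM.
Qed.

Lemma specXz x v (e : int) : spec x v -> v != 0 -> spec (x ^ e) (v ^ e).
Proof.
move=> h v0; case: e => n; first by rewrite -!exprnP; apply: specX.
by rewrite NegzE -!exprnN; apply: specV; [apply: specX | rewrite expf_neq0].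
Qed.

Lemma spec_prod n (f : nat -> F2) (g : nat -> FC) : (forall i, spec (f i) (g i)) ->
  spec (\prod_(i < n) f i) (\prod_(i < n) g i).
Proof. by move=> h; elim/big_rec2: _ => [|i y1 y2 _]; [exact: spec1 | exact: specM]. Qed.

Lemma spec_sum n (f : nat -> F2) (g : nat -> FC) : (forall i, (i < n)%N -> spec (f i) (g i)) ->
  spec (\sum_(i < n) f i) (\sum_(i < n) g i).
Proof.
move=> h; elim/big_rec2: _ => [|i y1 y2 _]; last exact: specD (h _ (ltn_ord i)).
by have := spec_tofrac 0; rewrite !rmorph0.
Qed.

Lemma spec_qv : spec qv (tofrac z%:P).
Proof. by have := spec_tofrac ('X%:P); rewrite ev_polyC map_polyX hornerX. Qed.

Lemma spec_av : spec av (tofrac 'X).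
Proof. by have := spec_tofrac 'X; rewrite /ev /= !map_polyX. Qed.

Lemma spec_qpochhammer x y v w k :
  spec x v -> spec y w -> spec (qpochhammer x y k) (qpochhammer v w k).
Proof.
move=> hx hy; apply: (@spec_prod k (fun i => 1 - x * y ^+ i) (fun i => 1 - v * w ^+ i)) => i.
exact: specB spec1 (specM hx (specX _ hy)).
Qed.

Lemma spec_qnumer u w a uC wC aC k : spec u uC -> spec w wC -> spec a aC -> aC != 0 ->
  spec (qnumer u w a k) (qnumer uC wC aC k).
Proof.
move=> hu hw ha aC0.
apply: specM; first apply: specM.
- exact: specX (spec_qpochhammer _ hu hw).
- exact: spec_qpochhammer _ (specM ha hu) hw.
- exact: spec_qpochhammer _ (spec_div hu ha aC0) hw.
Qed.

Lemma spec_qsummand d t q a qC aC k : spec q qC -> spec a aC ->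
  qC != 0 -> aC != 0 -> 1 - qC != 0 -> qdenom (qC ^+ d) aC k != 0 ->
  spec (qsummand d t q a k) (qsummand d t qC aC k).
Proof.
move=> hq ha qC0 aC0 qC1 D0.
have hqt := specXz t hq qC0; have hqd := specX d hq.
apply: specM; last exact: specXz.
apply: spec_div; [apply: specM | exact: spec_qnumer | by []]; last exact: spec_qnumer.
exact: spec_div (specB spec1 (specXz _ hq qC0)) (specB spec1 hq) qC1.
Qed.

End Specialization.

Definition Phi_rat (m : nat) : {poly rat} := map_poly (fun c : int => c%:~R : rat) 'Phi_m.

Lemma PhiQE m : PhiQ m = (Phi_rat m)%:P.
Proof. by []. Qed.

Lemma Phi_rat_neq0 m : Phi_rat m != 0.
Proof.
by rewrite -size_poly_eq0 size_map_inj_poly ?size_poly_eq0 ?monic_neq0 ?Cyclotomic_monic //;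
  apply: intr_inj.
Qed.

Section PrimitiveRoot.

Variables (m : nat) (z : algC).
Hypothesis prim_z : m.-primitive_root z.

Lemma root_ratr_Phi_rat (p : {poly rat}) : root (map_poly ratr p) z = (Phi_rat m %| p).
Proof.
have [p0 [min_p0 _] root_p0] := minCpolyP z.
suff <- : p0 = Phi_rat m by rewrite root_p0.
apply: (@map_poly_inj _ algC ratr); rewrite -min_p0 (minCpoly_cyclotomic prim_z).
rewrite -(Cintr_Cyclotomic prim_z) /Phi_rat -map_poly_comp.
by apply: eq_map_poly => c /=; rewrite rmorph_int.
Qed.

Lemma unit_of_Phi_rat_factor (c g : {poly rat}) :
  Phi_rat m = c * g -> (map_poly ratr g).[z] != 0 -> g \is a GRing.unit.
Proof.
move=> Phi_cg gz0.
have : root (map_poly ratr c) z.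
  have : root (map_poly ratr (Phi_rat m)) z by rewrite root_ratr_Phi_rat.
  by rewrite Phi_cg rmorphM rootM /root (negbTE gz0) orbF.
rewrite root_ratr_Phi_rat => /dvdpP [e c_ePhi].
apply/unitrPr; exists e; apply: (mulIf (Phi_rat_neq0 m)).
by rewrite mul1r {2}Phi_cg c_ePhi; ring.
Qed.

Lemma dvdR_PhiQ_of_ev_eq0 (f : R2) : ev z f = 0 -> dvdR (PhiQ m) f.
Proof.
move=> f0.
have Phi_coef i : Phi_rat m %| f`_i by rewrite -root_ratr_Phi_rat /root -ev_coef f0 coef0.
exists (\poly_(i < size f) (f`_i %/ Phi_rat m)); apply/polyP => i.
rewrite PhiQE coefMC coef_poly; case: ltnP => [_ | le_f_i]; first by rewrite divpK.
by rewrite mul0r nth_default.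
Qed.

Lemma coprimeR_PhiQ_of_ev_neq0 (D : R2) : ev z D != 0 -> coprimeR D (PhiQ m).
Proof.
move=> D0 h [c1 D_c1h] [c2 Phi_c2h].
have /andP[/eqP size_c2 /eqP size_h] : (size c2 == 1%N) && (size h == 1%N).
  by rewrite -size_mul_eq1 -Phi_c2h PhiQE size_polyC Phi_rat_neq0.
have h_C := size1_polyC (eq_leq size_h); have c2_C := size1_polyC (eq_leq size_c2).
have Phi_eq : Phi_rat m = c2`_0 * h`_0.
  by apply: polyC_inj; rewrite polyCM -c2_C -h_C -PhiQE.
have h0z : (map_poly ratr h`_0).[z] != 0.
  by apply: contraNneq D0 => h0z; rewrite D_c1h h_C rmorphM /= ev_polyC h0z mulr0.
by rewrite poly_unitE size_h (unit_of_Phi_rat_factor Phi_eq h0z).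
Qed.

Lemma congr_Phi_of_spec0 (x : F2) : spec z x 0 -> congr_Phi m x 0.
Proof.
move=> [N [D [D0 [x_ND]]]] /esym/eqP; rewrite mulf_eq0 invr_eq0 !tofrac_eq0 (negbTE D0) orbF.
move=> /eqP N0; exists N, D; split; first exact: coprimeR_PhiQ_of_ev_neq0.
by rewrite subr0; split=> //; apply: dvdR_PhiQ_of_ev_eq0.
Qed.

End PrimitiveRoot.

Theorem lemma2 (m d : nat) (t : int) :
  (1 < m)%N -> (2 <= d)%N -> coprime d m -> coprimez (d%:Z) t ->
  congr_Phi m
    (\sum_(k < m)
       qint (2 * d%:Z * k%:Z + t)
       * ((qpoch (qv ^ t) (qv ^+ d) k) ^+ 2
          * qpoch (av * qv ^ t) (qv ^+ d) k
          * qpoch (qv ^ t / av) (qv ^+ d) k)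
       / ((qpoch (qv ^+ d) (qv ^+ d) k) ^+ 2
          * qpoch (av * qv ^+ d) (qv ^+ d) k
          * qpoch (qv ^+ d / av) (qv ^+ d) k)
       * qv ^ ((d%:Z - 2 * t) * k%:Z))
    0.
Proof.
move=> m1 _ dm _; change (congr_Phi m (\sum_(k < m) qsummand d t qv av k) 0).
have [z prim_z] := C_prim_root_exists (ltnW m1).
pose zC : FC := tofrac z%:P; pose aC : FC := tofrac 'X.
have prim_zC : m.-primitive_root zC.
  by rewrite (fmorph_primitive_root (@tofrac {poly algC} \o polyC)).
have prim_wC : m.-primitive_root (zC ^+ d) by rewrite prim_root_exp_coprime.
have zC1 : 1 - zC != 0.
  by rewrite subr_eq0 eq_sym -[zC]expr1 -(prim_order_dvd prim_zC) dvdn1 gtn_eqF.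
have aC0 : aC != 0 by rewrite tofrac_eq0 polyX_eq0.
have aCm : aC ^+ m != 1.
  rewrite -rmorphXn -tofrac1 tofrac_eq; apply/eqP => Xm1.
  by move: (size_polyXn algC m); rewrite Xm1 size_poly1; lia.
have two0 : (2 : FC) != 0.
  by rewrite -(rmorph_nat (@tofrac {poly algC} \o polyC)) fmorph_eq0 Num.Theory.pnatr_eq0.
apply: (congr_Phi_of_spec0 prim_z).
rewrite -(@sum_qsummand_eq0 _ m d t zC aC prim_zC dm aC0 aCm two0).
apply: spec_sum => k ltkm.
exact: spec_qsummand (spec_qv z) (spec_av z) (prim_root_neq0 prim_zC) aC0 zC1
  (qdenom_neq0 prim_wC aCm ltkm).
Qed.
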